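(* Let $R=\bigoplus_{\alpha\in\Gamma}R_{\alpha}$ be a graded integral domain and let $\star$ be a semistar operation on $R$ such that $R^{\star}\subsetneq R_H$. Then (1) $N(\star)=R[X]\setminus\bigcup\{Q[X]: Q\in h\text{-}\mathrm{QMax}^{\widetilde{\star}}(R)\}$; (2) $\mathrm{Max}(\mathrm{NA}(R,\star))=\{Q\,\mathrm{NA}(R,\star): Q\in h\text{-}\mathrm{QMax}^{\widetilde{\star}}(R)\}$; (3) $\mathrm{NA}(R,\star)=\bigcap\{R_Q(X): Q\in h\text{-}\mathrm{QMax}^{\widetilde{\star}}(R)\}$.
   Context: $\Gamma$ is a commutative cancellative monoid (written additively) whose quotient group $\langle\Gamma\rangle$ is torsion-free. A graded integral domain $R=\bigoplus_{\alpha\in\Gamma}R_\alpha$ is an integral domain that is the direct sum of additive subgroups $R_\alpha$ with $R_\alpha R_\beta\subseteq R_{\alpha+\beta}$. $K$ is its quotient field, $H$ the set of nonzero homogeneous elements of $R$, and $R_H$ the homogeneous quotient field. An ideal $I$ of $R$ is homogeneous if $I=\bigoplus_\alpha(I\cap R_\alpha)$. For $a\in R_H$, $C(a)$ is the $R$-submodule of $R_H$ generated by the homogeneous components of $a$; for $f=f_0+\cdots+f_nX^n\in R[X]$, $A_f:=\sum_i C(f_i)$. A semistar operation on $R$ is a map $\star$ from the set $\overline{\mathcal F}(R)$ of nonzero $R$-submodules of $K$ to itself such that for all $0\ne x\in K$ and $E,F$: $(xE)^\star=xE^\star$; $E\subseteq F\Rightarrow E^\star\subseteq F^\star$; $E\subseteq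 E^\star$; $(E^\star)^\star=E^\star$. $\widetilde\star$ is the semistar operation $E^{\widetilde\star}=\{x\in K: xJ\subseteq E$ for some finitely generated ideal $J\subseteq R$ with $J^\star=R^\star\}$. A nonzero ideal $I$ of $R$ is a quasi-$\star$-ideal if $I^\star\cap R=I$; $h\text{-}\mathrm{QMax}^{\star}(R)$ denotes the set of ideals of $R$ that are maximal in the set of all proper homogeneous quasi-$\star$-ideals of $R$. $N(\star):=\{f\in R[X]: f\ne0,\ A_f^\star=R^\star\}$ and $\mathrm{NA}(R,\star):=R[X]_{N(\star)}$. For a domain $D$, $D(X):=D[X]_S$ where $S$ is the set of polynomials whose coefficients generate the unit ideal of $D$. $\mathrm{Max}$ denotes the set of maximal ideals. *)

From HB Require Import structures.
From mathcomp Require Import all_boot all_order all_algebra.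
From mathcomp Require Import fraction.

Set Implicit Arguments.
Unset Strict Implicit.
Unset Printing Implicit Defensive.

Import GRing.Theory.
Local Open Scope ring_scope.

Definition psubset (T : Type) (A B : T -> Prop) := forall x, A x -> B x.

(* Gamma is a submonoid of the torsion-free abelian group G; the group
   generated by Gamma inside G is then the (torsion-free) quotient group. *)
Definition torsion_free (G : zmodType) :=
  forall (x : G) (n : nat), (0 < n)%N -> x *+ n = 0 -> x = 0.

Definition submonoid (G : zmodType) (Gam : G -> Prop) :=
  Gam 0 /\ (forall a b, Gam a -> Gam b -> Gam (a + b)).

Definition is_subring (L : comPzRingType) (A : L -> Prop) :=
  [/\ A 1, (forall x y, A x -> A y -> A (x - y)) & (forall x y, A x -> A y -> A (x * y))].

Definition is_submod (L : comPzRingType) (A E : L -> Prop) :=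
  [/\ E 0, (forall x y, E x -> E y -> E (x + y)) & (forall r x, A r -> E x -> E (r * x))].

Definition nz_submod (L : comPzRingType) (A E : L -> Prop) :=
  is_submod A E /\ exists x, E x /\ x != 0.

Definition is_ideal (L : comPzRingType) (A I : L -> Prop) := psubset I A /\ is_submod A I.

Definition is_maximal_ideal (L : comPzRingType) (A M : L -> Prop) :=
  [/\ is_ideal A M, ~ M 1 &
      forall I, is_ideal A I -> ~ I 1 -> psubset M I -> I = M].

Definition span (L : comPzRingType) (A S : L -> Prop) : L -> Prop :=
  fun x => exists s : seq (L * L),
    (forall p, p \in s -> A p.1 /\ S p.2) /\ x = \sum_(p <- s) p.1 * p.2.

Definition is_fg_ideal (L : comPzRingType) (A J : L -> Prop) :=
  exists l : seq L, (forall y, y \in l -> A y) /\ J = span A (fun y => y \in l).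

Definition scale_set (L : comPzRingType) (x : L) (E : L -> Prop) : L -> Prop :=
  fun y => exists z, E z /\ y = x * z.

(* R is a subring of the field K, K is the quotient field of R,
   Rg a is the homogeneous component R_a (a : G; R_a = 0 for a outside Gamma). *)
Definition is_decomp (G : zmodType) (K : fieldType) (Rg : G -> K -> Prop)
  (r : K) (s : seq (G * K)) :=
  [/\ uniq (map fst s), (forall p, p \in s -> Rg p.1 p.2) & r = \sum_(p <- s) p.2].

Record graded_domain (G : zmodType) (K : fieldType) (Gam : G -> Prop)
  (R : K -> Prop) (Rg : G -> K -> Prop) : Prop := {
  gd_torsion_free : torsion_free G;
  gd_submonoid : submonoid Gam;
  gd_subring : is_subring R;
  gd_quotient_field : forall x : K, exists a b, [/\ R a, R b, b != 0 & x = a / b];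
  gd_comp0 : forall a, Rg a 0;
  gd_compB : forall a x y, Rg a x -> Rg a y -> Rg a (x - y);
  gd_compR : forall a x, Rg a x -> R x;
  gd_comp_out : forall a x, ~ Gam a -> Rg a x -> x = 0;
  gd_compM : forall a b x y, Rg a x -> Rg b y -> Rg (a + b) (x * y);
  gd_sum : forall r, R r -> exists s, is_decomp Rg r s;
  gd_direct : forall s, is_decomp Rg 0 s -> forall p, p \in s -> p.2 = 0
}.

Definition homogeneous (G : zmodType) (K : fieldType) (Rg : G -> K -> Prop) (x : K) :=
  exists a, Rg a x.

Definition Hset (G : zmodType) (K : fieldType) (Rg : G -> K -> Prop) : K -> Prop :=
  fun x => x != 0 /\ homogeneous Rg x.

Definition RH (G : zmodType) (K : fieldType) (R : K -> Prop) (Rg : G -> K -> Prop) : K -> Prop :=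
  fun x => exists a h, [/\ R a, Hset Rg h & x = a / h].

Definition components (G : zmodType) (K : fieldType) (Rg : G -> K -> Prop) (r : K) : K -> Prop :=
  fun x => exists s, is_decomp Rg r s /\ exists a, (a, x) \in s.

Definition homogeneous_ideal (G : zmodType) (K : fieldType) (R : K -> Prop)
  (Rg : G -> K -> Prop) (I : K -> Prop) :=
  is_ideal R I /\
  forall r, I r -> exists s, is_decomp Rg r s /\ forall p, p \in s -> I p.2.

Record semistar (K : fieldType) (R : K -> Prop) (star : (K -> Prop) -> (K -> Prop)) : Prop := {
  ss_dom : forall E, nz_submod R E -> nz_submod R (star E);
  ss_scale : forall x E, x != 0 -> nz_submod R E -> star (scale_set x E) = scale_set x (star E);
  ss_mono : forall E F, nz_submod R E -> nz_submod R F -> psubset E F -> psubset (star E) (star F);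
  ss_ext : forall E, nz_submod R E -> psubset E (star E);
  ss_idem : forall E, nz_submod R E -> star (star E) = star E
}.

Definition stilde (K : fieldType) (R : K -> Prop) (star : (K -> Prop) -> (K -> Prop))
  (E : K -> Prop) : K -> Prop :=
  fun x => exists J, [/\ is_fg_ideal R J, (exists y, J y /\ y != 0), star J = star R &
                         forall j, J j -> E (x * j)].

Definition quasi_ideal (K : fieldType) (R : K -> Prop) (star : (K -> Prop) -> (K -> Prop))
  (I : K -> Prop) :=
  [/\ is_ideal R I, (exists x, I x /\ x != 0) & (fun x => star I x /\ R x) = I].

Definition proper_hquasi (G : zmodType) (K : fieldType) (R : K -> Prop) (Rg : G -> K -> Prop)
  (star : (K -> Prop) -> (K -> Prop)) (I : K -> Prop) :=
  [/\ quasi_ideal R star I, homogeneous_ideal R Rg I & ~ I 1].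

Definition hQMax (G : zmodType) (K : fieldType) (R : K -> Prop) (Rg : G -> K -> Prop)
  (star : (K -> Prop) -> (K -> Prop)) (Q : K -> Prop) :=
  proper_hquasi R Rg star Q /\
  forall I, proper_hquasi R Rg star I -> psubset Q I -> I = Q.

(* D[X] as the polynomials of K[X] with coefficients in D *)
Definition polys (K : fieldType) (D : K -> Prop) : {poly K} -> Prop :=
  fun f => forall i, D f`_i.

Definition Af (G : zmodType) (K : fieldType) (R : K -> Prop) (Rg : G -> K -> Prop)
  (f : {poly K}) : K -> Prop :=
  span R (fun x => exists i, components Rg f`_i x).

Definition Nstar (G : zmodType) (K : fieldType) (R : K -> Prop) (Rg : G -> K -> Prop)
  (star : (K -> Prop) -> (K -> Prop)) : {poly K} -> Prop :=
  fun f => [/\ polys R f, f != 0 & star (Af R Rg f) = star R].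

Definition toFX (K : fieldType) (f : {poly K}) : {fraction {poly K}} := tofrac f.

Definition NA (G : zmodType) (K : fieldType) (R : K -> Prop) (Rg : G -> K -> Prop)
  (star : (K -> Prop) -> (K -> Prop)) : {fraction {poly K}} -> Prop :=
  fun z => exists f g, [/\ polys R f, Nstar R Rg star g & z = toFX f / toFX g].

Definition ext_ideal (K : fieldType) (A : {fraction {poly K}} -> Prop) (Q : K -> Prop) :
  {fraction {poly K}} -> Prop :=
  span A (fun z => exists q, Q q /\ z = toFX q%:P).

Definition loc (K : fieldType) (R Q : K -> Prop) : K -> Prop :=
  fun x => exists a s, [/\ R a, R s, ~ Q s & x = a / s].

(* D(X) = D[X]_S, S = polynomials whose coefficients generate D *)
Definition nagata (K : fieldType) (D : K -> Prop) : {fraction {poly K}} -> Prop :=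
  fun z => exists f g, [/\ polys D f, polys D g,
                           span D (fun c => exists i, c = g`_i) 1 &
                           z = toFX f / toFX g].

From HB Require Import structures.
From mathcomp Require Import all_boot all_order all_algebra.
From mathcomp Require Import fraction.
From mathcomp Require Import boolp classical_sets.
From mathcomp Require Import ring lra zify.

(* The ideals of h-QMax^~star are the maximal members among the homogeneous ideals [I]
   with [1 \notin I^~star]; Zorn's lemma provides them above any such ideal.  They are
   prime: for homogeneous [x], [y] outside such an [M], the ideals [M + xR] and [M + yR]
   contain finitely generated ideals [J] with [J^star = R^star], whose product has the same
   property and lies in [M + xyR].  Primality passes from homogeneous to arbitrary elements
   because sums are unique in torsion-free groups: among the degrees of finitely many
   components some [a + b] is attained only once (maximize an additive map to [rat]
   separating the degrees).
   Hence [f] lies in no [Q[X]] exactly when its content [A_f] satisfies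
   [A_f^star = R^star], i.e. [f \in N(star)], and Gauss's lemma for the primes [Q] makes
   [N(star)] multiplicative.  A set of polynomials closed under sums and multiplication by
   [X] and missing [N(star)] has a content ideal [C] with [1 \notin C^~star], so it lies in
   some [Q[X]].  Applied to the polynomial part of a proper ideal of [NA(R, star)] this
   yields the maximal ideals; applied to the denominators of [z] it shows that [z] lies in
   [NA(R, star)] once it lies in every [R_Q(X)]. *)

Set Implicit Arguments.
Unset Strict Implicit.
Unset Printing Implicit Defensive.

Import Order.TTheory GRing.Theory Num.Theory.
Local Open Scope ring_scope.

Lemma pred_ext (T : Type) (A B : T -> Prop) : psubset A B -> psubset B A -> A = B.
Proof. by move=> AB BA; apply: funext => x; apply: propext; split; [apply: AB | apply: BA]. Qed.

Lemma closed_sum (V : nmodType) (S : V -> Prop) :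
  S 0 -> (forall x y, S x -> S y -> S (x + y)) ->
  forall (I : eqType) (r : seq I) (P : pred I) (F : I -> V),
  (forall i, i \in r -> P i -> S (F i)) -> S (\sum_(i <- r | P i) F i).
Proof.
move=> S0 SD I r P F SF; rewrite big_seq_cond.
by apply: big_ind => // i /andP[]; exact: SF.
Qed.

Lemma sum_pred1_seq (T : eqType) (V : nmodType) (U : seq T) x (v : V) :
  uniq U -> x \in U -> \sum_(a <- U | x == a) v = v.
Proof.
move=> Uu xU; rewrite (big_rem x) //= eqxx big1_seq ?addr0 // => a /andP[/eqP<-].
by rewrite mem_rem_uniqF.
Qed.

Section AvoidKernels.
Variables (F : numFieldType) (n : nat).

(* Perturb [t] along a coordinate where the new row is nonzero, by a multiple exceeding
   every ratio that could cancel. *)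
Lemma exists_col_mulmx_neq0 (rs : seq 'rV[F]_n) :
  (forall r, r \in rs -> r != 0) ->
  exists t : 'cV[F]_n, forall r, r \in rs -> (r *m t) 0 0 != 0.
Proof.
elim: rs => [|r rs IH] rs_nz; first by exists 0.
have [t t_ok] : exists t : 'cV[F]_n, forall s, s \in rs -> (s *m t) 0 0 != 0.
  by apply: IH => s s_rs; apply: rs_nz; rewrite inE s_rs orbT.
have [j rj_nz] : exists j, r 0 j != 0.
  apply/existsP; apply: contraT; rewrite negb_exists => /forallP r0.
  have /negP[] := rs_nz r (mem_head _ _); apply/eqP/rowP => k.
  by rewrite mxE; apply/eqP; rewrite -[_ == _]negbK r0.
pose a (s : 'rV[F]_n) := (s *m t) 0 0.
pose lam := 1 + \sum_(s <- r :: rs) `|a s / s 0 j|.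
have lam_gt0 : 0 < lam by rewrite ltr_pwDl ?sumr_ge0.
have lam_gt s : s \in r :: rs -> `|a s / s 0 j| < lam.
  move=> s_in; rewrite /lam (big_rem s) //= addrCA ltrDl.
  by rewrite ltr_pwDl ?sumr_ge0.
exists (t + lam *: delta_mx j 0) => s s_in.
have -> : (s *m (t + lam *: delta_mx j 0)) 0 0 = a s + lam * s 0 j.
  by rewrite mulmxDr -scalemxAr -colE [LHS]mxE [X in _ + X]mxE [col _ _ _ _]mxE.
have [sj0|sj_nz] := eqVneq (s 0 j) 0.
  rewrite sj0 mulr0 addr0; move: s_in; rewrite inE => /predU1P[sr|]; last exact: t_ok.
  by rewrite -sr sj0 eqxx in rj_nz.
apply: contraTneq (lam_gt s s_in) => /eqP; rewrite addr_eq0 => /eqP as_eq.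
have -> : a s / s 0 j = - lam by rewrite as_eq mulNr mulfK.
by rewrite normrN gtr0_norm // ltxx.
Qed.

End AvoidKernels.

Lemma exists_seq_argmax (T : eqType) (R : realDomainType) (f : T -> R) (s : seq T) :
  s != [::] -> exists2 x, x \in s & forall y, y \in s -> f y <= f x.
Proof.
elim: s => // a s IH _; have [->|/IH[x xs xmax]] := eqVneq s [::].
  by exists a; rewrite ?mem_seq1 // => y; rewrite mem_seq1 => /eqP->.
have [le_ax|lt_xa] := leP (f a) (f x).
  by exists x; rewrite ?inE ?xs ?orbT // => y; rewrite inE => /predU1P[->|/xmax].
exists a; rewrite ?mem_head // => y; rewrite inE => /predU1P[->//|/xmax le_yx].
exact: le_trans le_yx (ltW lt_xa).
Qed.

Lemma map_mx_intr_inj (R : numDomainType) m n :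
  injective (map_mx intr : 'M[int]_(m, n) -> 'M[R]_(m, n)).
Proof.
move=> A B /matrixP AB; apply/matrixP => i j.
by apply: (@intr_inj R); have := AB i j; rewrite !mxE.
Qed.

Section Separation.
Variables (G : zmodType) (l : seq G).
Hypothesis tfG : torsion_free G.

Local Notation n := (size l).
Let g (i : 'I_n) := l`_i.
Let e (i : 'I_n) : 'rV[int]_n := delta_mx 0 i.
Let ratv (v : 'rV[int]_n) : 'rV[rat]_n := map_mx intr v.

Definition intcomb (v : 'rV[int]_n) : G := \sum_i g i *~ v 0 i.

Lemma intcombB : zmod_morphism intcomb.
Proof. by move=> v w; rewrite /intcomb -sumrB; apply: eq_bigr => i _; rewrite !mxE mulrzBr. Qed.

HB.instance Definition _ := GRing.isZmodMorphism.Build _ _ intcomb intcombB.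

Lemma intcombZ (z : int) v : intcomb (z *: v) = intcomb v *~ z.
Proof. by rewrite /intcomb mulrz_suml; apply: eq_bigr => i _; rewrite mxE mulrC mulrzA. Qed.

Lemma intcomb_delta i : intcomb (e i) = g i.
Proof.
rewrite /intcomb (bigD1 i) //= big1 ?addr0 => [|k /negbTE ki]; first by rewrite mxE !eqxx.
by rewrite mxE ki andbF mulr0z.
Qed.

Definition quad := ('I_n * 'I_n * 'I_n * 'I_n)%type.

Definition relation_vec (q : quad) : 'rV[int]_n :=
  let: (i, j, k, m) := q in if g i + g j == g k + g m then e i + e j - e k - e m else 0.

Definition relations_mx : 'M[rat]_(#|{: quad}|, n) :=
  \matrix_(k < #|{: quad}|) ratv (relation_vec (enum_val k)).

Lemma intcomb_relation_vec q : intcomb (relation_vec q) = 0.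
Proof.
case: q => [[[i j] k] m] /=; case: eqP => [gE|_]; last exact: raddf0.
by rewrite !raddfB raddfD /= !intcomb_delta gE -addrA -opprD subrr.
Qed.

(* Clearing denominators turns a rational relation into an integral one, and
   torsion-freeness cancels the common denominator. *)
Lemma relations_mx_saturated i j : (ratv (e i - e j) <= relations_mx)%MS -> g i = g j.
Proof.
case/submxP=> D; rewrite mulmx_sum_row => eqD.
pose d := \prod_k denq (D 0 k).
have [z Dz] : exists z : 'I_#|{: quad}| -> int, forall k, d%:~R * D 0 k = (z k)%:~R.
  exists (fun k => (\prod_(k' | k' != k) denq (D 0 k')) * numq (D 0 k)) => k.
  by rewrite /d (bigD1 k) //= !rmorphM /= numqE; ring.
have d_gt0 : 0 < d by apply: prodr_gt0 => k _; exact: denq_gt0.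
have eq_int : d *: (e i - e j) = \sum_k z k *: relation_vec (enum_val k).
  apply: (@map_mx_intr_inj rat); rewrite map_mxZ -/(ratv (e i - e j)) eqD scaler_sumr.
  rewrite [RHS]raddf_sum /=.
  by apply: eq_bigr => k _; rewrite rowK scalerA Dz map_mxZ.
have := congr1 intcomb eq_int.
rewrite intcombZ raddf_sum big1 => [|k _]; last by rewrite /= intcombZ intcomb_relation_vec mul0rz.
rewrite raddfB /= !intcomb_delta -(gtz0_abs d_gt0) -pmulrn => /tfG.
by rewrite absz_gt0 gt_eqF // => /(_ isT) /eqP; rewrite subr_eq0 => /eqP.
Qed.

(* Take a functional killing the rows of [relations_mx] but no [e i - e j] with
   [g i != g j]; by saturation these lie outside the row space. *)
Lemma exists_separating_index_map : exists psi : 'I_n -> rat,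
  (forall i j k m, g i + g j = g k + g m -> psi i + psi j = psi k + psi m) /\
  (forall i j, g i != g j -> psi i != psi j).
Proof.
pose C := cokermx relations_mx.
pose rs := [seq ratv (e p.1 - e p.2) *m C | p <- enum {: 'I_n * 'I_n} & g p.1 != g p.2].
have [t t_ok] : exists t : 'cV[rat]_n, forall r, r \in rs -> (r *m t) 0 0 != 0.
  apply: exists_col_mulmx_neq0 => r /mapP[p]; rewrite mem_filter => /andP[gp _] ->.
  by apply: contra gp; rewrite -submxE => /relations_mx_saturated ->.
pose f (v : 'rV[int]_n) := (ratv v *m C *m t) 0 0.
have fB v w : f (v - w) = f v - f w.
  by rewrite /f /ratv raddfB /= !mulmxBl [LHS]mxE [X in _ + X]mxE.
have fD v w : f (v + w) = f v + f w.
  by rewrite /f /ratv raddfD /= !mulmxDl [LHS]mxE.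
exists (fun i => f (e i)); split => [i j k m gE|i j gij].
  have : f (relation_vec (i, j, k, m)) = 0.
    have /eqP rel_C : ratv (relation_vec (i, j, k, m)) *m C == 0.
      rewrite -submxE; have := row_sub (enum_rank (i, j, k, m)) relations_mx.
      by rewrite rowK enum_rankK.
    by rewrite /f rel_C !mul0mx mxE.
  by rewrite /= gE eqxx !fB fD => /eqP; rewrite !subr_eq0 subr_eq => /eqP ->; rewrite addrC.
have : f (e i - e j) != 0.
  apply: (t_ok (ratv (e i - e j) *m C)); apply/mapP; exists (i, j) => //.
  by rewrite mem_filter gij mem_enum.
by rewrite fB subr_eq0.
Qed.

Lemma exists_separating_map : exists psi : G -> rat,
  (forall x y z w, x \in l -> y \in l -> z \in l -> w \in l ->
     x + y = z + w -> psi x + psi y = psi z + psi w) /\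
  (forall x y, x \in l -> y \in l -> x != y -> psi x != psi y).
Proof.
have [psi [psiD psi_sep]] := exists_separating_index_map.
pose Psi x := oapp psi 0 (insub (index x l) : option 'I_n).
have PsiE x : x \in l -> exists2 i, x = g i & Psi x = psi i.
  move=> xl; rewrite /Psi; case: insubP => [i _ iE|]; last by rewrite index_mem xl.
  by exists i; rewrite // /g iE nth_index.
exists Psi; split => [x y z w /PsiE[i -> ->] /PsiE[j -> ->] /PsiE[k -> ->] /PsiE[m -> ->]|].
  exact: psiD.
by move=> x y /PsiE[i -> ->] /PsiE[j -> ->]; exact: psi_sep.
Qed.

End Separation.

Lemma torsion_free_unique_sum (G : zmodType) (A B : seq G) :
  torsion_free G -> A != [::] -> B != [::] ->
  exists a b, [/\ a \in A, b \in B & forall a' b', a' \in A -> b' \in B ->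
     a' + b' = a + b -> a' = a /\ b' = b].
Proof.
move=> tfG nzA nzB; have [psi [psiD psi_sep]] := exists_separating_map (A ++ B) tfG.
have inA x : x \in A -> x \in A ++ B by rewrite mem_cat => ->.
have inB x : x \in B -> x \in A ++ B by rewrite mem_cat orbC => ->.
have [a aA a_max] := exists_seq_argmax psi nzA.
have [b bB b_max] := exists_seq_argmax psi nzB.
exists a, b; split=> // a' b' a'A b'B sE.
have psiE := psiD _ _ _ _ (inA _ a'A) (inB _ b'B) (inA _ aA) (inB _ bB) sE.
have le_a := a_max a' a'A; have le_b := b_max b' b'B.
have psi_a : psi a' = psi a by apply/eqP; rewrite eq_le le_a /=; lra.
have psi_b : psi b' = psi b by move: psiE; rewrite psi_a => /addrI.
split; [have [//|ne] := eqVneq a' a | have [//|ne] := eqVneq b' b].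
  by have := psi_sep _ _ (inA _ a'A) (inA _ aA) ne; rewrite psi_a eqxx.
by have := psi_sep _ _ (inB _ b'B) (inB _ bB) ne; rewrite psi_b eqxx.
Qed.

Section SubringIdeal.
Variables (L : comPzRingType) (A : L -> Prop).
Hypothesis sA : is_subring A.

Lemma subring1 : A 1. Proof. by case: sA. Qed.
Lemma subringB x y : A x -> A y -> A (x - y). Proof. by case: sA => _ sB _; exact: sB. Qed.
Lemma subringM x y : A x -> A y -> A (x * y). Proof. by case: sA => _ _ sM; exact: sM. Qed.
Lemma subring0 : A 0. Proof. by rewrite -(subrr 1); apply: subringB; exact: subring1. Qed.
Lemma subringN x : A x -> A (- x). Proof. by rewrite -sub0r; apply: subringB subring0. Qed.
Lemma subringD x y : A x -> A y -> A (x + y).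
Proof. by move=> Ax Ay; rewrite -[y]opprK; apply: subringB (subringN Ay). Qed.

Lemma subring_sum (I : eqType) (r : seq I) (P : pred I) (F : I -> L) :
  (forall i, i \in r -> P i -> A (F i)) -> A (\sum_(i <- r | P i) F i).
Proof. exact: closed_sum subring0 subringD _ r P F. Qed.

Lemma subring_submod : is_submod A A.
Proof. by split; [exact: subring0 | exact: subringD | exact: subringM]. Qed.

Variable I : L -> Prop.
Hypothesis idI : is_ideal A I.

Lemma ideal_mem x : I x -> A x. Proof. by case: idI => IA _; exact: IA. Qed.
Lemma ideal0 : I 0. Proof. by case: idI => _ []. Qed.
Lemma idealD x y : I x -> I y -> I (x + y). Proof. by case: idI => _ [_ ID _]; exact: ID. Qed.
Lemma idealM r x : A r -> I x -> I (r * x). Proof. by case: idI => _ [_ _ IM]; exact: IM. Qed.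
Lemma idealMr x r : I x -> A r -> I (x * r). Proof. by rewrite mulrC => Ix Ar; exact: idealM. Qed.
Lemma idealN x : I x -> I (- x).
Proof. by rewrite -mulN1r; apply: idealM; apply: subringN subring1. Qed.
Lemma idealB x y : I x -> I y -> I (x - y). Proof. by move=> Ix Iy; apply: idealD (idealN Iy). Qed.

Lemma ideal_sum (J : eqType) (r : seq J) (P : pred J) (F : J -> L) :
  (forall i, i \in r -> P i -> I (F i)) -> I (\sum_(i <- r | P i) F i).
Proof. exact: closed_sum ideal0 idealD _ r P F. Qed.

End SubringIdeal.

Section Span.
Variables (L : comPzRingType) (A S : L -> Prop).
Hypothesis sA : is_subring A.

Lemma span0 : span A S 0.
Proof. by exists [::]; rewrite big_nil. Qed.

Lemma span_gen x : S x -> span A S x.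
Proof.
move=> Sx; exists [:: (1, x)]; rewrite big_seq1 mul1r; split=> // p.
by rewrite inE => /eqP ->; split=> //; exact: subring1.
Qed.

Lemma spanD x y : span A S x -> span A S y -> span A S (x + y).
Proof.
move=> [s [Ss ->]] [t [St ->]]; exists (s ++ t); rewrite big_cat; split=> // p.
by rewrite mem_cat => /orP[/Ss|/St].
Qed.

Lemma spanM r x : A r -> span A S x -> span A S (r * x).
Proof.
move=> Ar [s [Ss ->]]; exists [seq (r * p.1, p.2) | p <- s]; split.
  by move=> _ /mapP[p /Ss[Ap1 Sp2] ->]; split=> //; exact: subringM.
by rewrite big_map mulr_sumr; apply: eq_bigr => p _; rewrite mulrA.
Qed.

Lemma span_sum (I : eqType) (r : seq I) (P : pred I) (F : I -> L) :
  (forall i, i \in r -> P i -> span A S (F i)) -> span A S (\sum_(i <- r | P i) F i).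
Proof. exact: closed_sum span0 spanD _ r P F. Qed.

Lemma span_submod : is_submod A (span A S).
Proof. by split; [exact: span0 | exact: spanD | exact: spanM]. Qed.

Lemma span_min E : is_submod A E -> psubset S E -> psubset (span A S) E.
Proof.
move=> [E0 ED EM] SE _ [s [Ss ->]]; apply: closed_sum => // p /Ss[Ap1 Sp2] _.
exact/EM/SE.
Qed.

Lemma span_ideal : psubset S A -> is_ideal A (span A S).
Proof. by move=> SA; split; [apply: span_min (subring_submod sA) SA | exact: span_submod]. Qed.

End Span.

Lemma span_mono (L : comPzRingType) (A S T : L -> Prop) :
  psubset S T -> psubset (span A S) (span A T).
Proof. by move=> ST x [s [Ss ->]]; exists s; split=> // p /Ss[? ?]; split=> //; exact: ST. Qed.

Lemma span_mul (L : comPzRingType) (A S T : L -> Prop) a b : is_subring A ->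
  span A S a -> span A T b ->
  span A (fun z => exists x y, [/\ S x, T y & z = x * y]) (a * b).
Proof.
move=> sA [s [Ss ->]] [t [Tt ->]].
exists [seq (p.1 * q.1, p.2 * q.2) | p <- s, q <- t]; split.
  move=> _ /allpairsP[[p q] [/Ss[Ap Sp] /Tt[Aq Tq] ->]] /=.
  by split; [exact: subringM | exists p.2, q.2].
rewrite big_allpairs_dep mulr_suml; apply: eq_bigr => p _; rewrite mulr_sumr.
by apply: eq_bigr => q _ /=; rewrite mulrACA.
Qed.

Lemma chain_bigcup_seq (T : eqType) (F : set (set T)) X0 (l : seq T) :
  total_on F subset -> F X0 -> (forall y, y \in l -> (\bigcup_(X in F) X)%classic y) ->
  exists2 X, F X & forall y, y \in l -> X y.
Proof.
move=> Ftot FX0; elim: l => [|y l IH] ly; first by exists X0.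
have [X FX lX] : exists2 X, F X & forall z, z \in l -> X z.
  by apply: IH => z zl; apply: ly; rewrite inE zl orbT.
have [Y FY Yy] := ly y (mem_head _ _).
have [XY|YX] := Ftot X Y FX FY.
  by exists Y => // z; rewrite inE => /predU1P[->//|/lX/XY].
by exists X => // z; rewrite inE => /predU1P[->|/lX//]; exact: YX.
Qed.

Lemma chain_bigcup_ideal (L : comPzRingType) (A : L -> Prop) (F : set (L -> Prop)) X0 :
  (forall X, F X -> is_ideal A X) -> total_on F subset -> F X0 ->
  is_ideal A (\bigcup_(X in F) X)%classic.
Proof.
move=> Fid Ftot FX0; split; first by move=> x [X /Fid/ideal_mem]; apply.
split; first by exists X0 => //; exact: ideal0 (Fid _ FX0).
  move=> x y [X FX Xx] [Y FY Yy]; have [XY|YX] := Ftot X Y FX FY.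
    by exists Y => //; exact: (idealD (Fid _ FY) (XY _ Xx) Yy).
  by exists X => //; exact: (idealD (Fid _ FX) Xx (YX _ Yy)).
by move=> r x Ar [X FX Xx]; exists X => //; exact: (idealM (Fid _ FX) Ar Xx).
Qed.

Section Graded.
Variables (G : zmodType) (K : fieldType) (Gam : G -> Prop) (R : K -> Prop) (Rg : G -> K -> Prop).
Hypothesis gd : graded_domain Gam R Rg.
Let sR := gd_subring gd.

Lemma Rg0 a : Rg a 0. Proof. exact: gd_comp0 gd a. Qed.
Lemma RgN a x : Rg a x -> Rg a (- x).
Proof. by rewrite -sub0r; apply: gd_compB gd _ _ _ (Rg0 a). Qed.
Lemma RgD a x y : Rg a x -> Rg a y -> Rg a (x + y).
Proof. by move=> Rx Ry; rewrite -[y]opprK; apply: gd_compB gd _ _ _ Rx (RgN Ry). Qed.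

(* A list of (degree, element) pairs stands for the formal sum of its elements. *)
Definition hcomp (s : seq (G * K)) a := \sum_(p <- s | p.1 == a) p.2.
Definition collect (s : seq (G * K)) := [seq (a, hcomp s a) | a <- undup (map fst s)].

Lemma sum_collect s : \sum_(p <- collect s) p.2 = \sum_(p <- s) p.2.
Proof.
rewrite big_map /hcomp; under eq_bigr => a _ do rewrite big_mkcond.
rewrite exchange_big /=; apply: eq_big_seq => p ps; rewrite -big_mkcond /=.
by rewrite sum_pred1_seq ?undup_uniq // mem_undup map_f.
Qed.

Lemma map_fst_collect s : map fst (collect s) = undup (map fst s).
Proof. by rewrite -map_comp map_id. Qed.

Lemma uniq_collect s : uniq (map fst (collect s)).
Proof. by rewrite map_fst_collect undup_uniq. Qed.

Lemma hcomp_notin s a : a \notin map fst s -> hcomp s a = 0.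
Proof.
by move=> sa; rewrite /hcomp big1_seq // => p /andP[/eqP pa ps]; rewrite -pa map_f in sa.
Qed.

Lemma hcomp_uniq s a x : uniq (map fst s) -> (a, x) \in s -> hcomp s a = x.
Proof.
elim: s => // -[b y] s IH /= /andP[b_s us]; rewrite inE /hcomp big_cons /=.
case/predU1P => [[-> ->]|axs]; first by rewrite eqxx -/(hcomp s b) hcomp_notin ?addr0.
suff /negbTE-> : b != a by exact: IH.
by apply: contraNneq b_s => ->; rewrite (map_f fst axs).
Qed.

Lemma hcomp_mem s a : uniq (map fst s) -> a \in map fst s -> (a, hcomp s a) \in s.
Proof. by move=> us /mapP[[b x] bxs /= ->]; rewrite (hcomp_uniq us bxs). Qed.

Lemma hcomp_collect s a : hcomp (collect s) a = hcomp s a.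
Proof.
have [sa|sa] := boolP (a \in map fst s).
  by apply: hcomp_uniq (uniq_collect s) _; apply/mapP; exists a; rewrite ?mem_undup.
by rewrite !hcomp_notin // map_fst_collect mem_undup.
Qed.

Lemma Rg_hcomp s a : (forall p, p \in s -> Rg p.1 p.2) -> Rg a (hcomp s a).
Proof. by move=> Rs; apply: (closed_sum (Rg0 a) (@RgD a)) => p ps /eqP <-; exact: Rs. Qed.

Lemma decomp_collect s : (forall p, p \in s -> Rg p.1 p.2) ->
  is_decomp Rg (\sum_(p <- s) p.2) (collect s).
Proof.
move=> Rs; split; [exact: uniq_collect | | by rewrite sum_collect].
by move=> _ /mapP[a _ ->]; exact: Rg_hcomp.
Qed.

(* [s] and [-t] together decompose [0], so each degree part of the collected list
   vanishes by directness. *)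
Lemma decomp_unique r s t : is_decomp Rg r s -> is_decomp Rg r t -> hcomp s =1 hcomp t.
Proof.
move=> [us Rs ->] [ut Rt rt] a.
pose u := s ++ [seq (p.1, - p.2) | p <- t].
have Ru p : p \in u -> Rg p.1 p.2.
  by rewrite mem_cat => /orP[/Rs //|/mapP[q /Rt Rq ->]]; exact: RgN.
have hcompE : hcomp u a = hcomp s a - hcomp t a by rewrite /hcomp big_cat big_map sumrN.
have sum0 : \sum_(p <- u) p.2 = 0 by rewrite big_cat /= big_map sumrN -rt subrr.
have := decomp_collect Ru; rewrite sum0 => dec0.
apply/eqP; rewrite -subr_eq0 -hcompE; have [ua|ua] := boolP (a \in map fst u).
  rewrite -mem_undup -map_fst_collect in ua.
  by apply/eqP; rewrite -hcomp_collect; exact: (gd_direct gd dec0 (hcomp_mem (uniq_collect u) ua)).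
by rewrite hcomp_notin.
Qed.

Lemma components_hcomp r s x :
  is_decomp Rg r s -> components Rg r x -> exists a, x = hcomp s a.
Proof.
move=> rs [t [rt [a axt]]]; exists a.
by rewrite (decomp_unique rs rt) (hcomp_uniq _ axt) //; case: rt.
Qed.

Lemma components_homogeneous r x : components Rg r x -> homogeneous Rg x.
Proof. by move=> [s [[_ Rs _] [a /Rs]]]; exists a. Qed.

Lemma components_R r x : components Rg r x -> R x.
Proof. by move=> /components_homogeneous[a /(gd_compR gd)]. Qed.

Lemma components0 x : components Rg 0 x -> x = 0.
Proof.
have dec0 : is_decomp Rg 0 [::] by split=> //; rewrite big_nil.
by move=> /(components_hcomp dec0)[a ->]; rewrite /hcomp big_nil.
Qed.

Lemma span_components r : R r -> span R (components Rg r) r.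
Proof.
move=> Rr; have [s [us Rs ->]] := gd_sum gd Rr.
apply: span_sum => p ps _; apply: (span_gen sR).
by exists s; split; [split | exists p.1; case: p ps].
Qed.

Lemma homogeneous_idealW I : is_ideal R I ->
  (forall r, I r -> exists s : seq (G * K),
     (forall p, p \in s -> Rg p.1 p.2 /\ I p.2) /\ r = \sum_(p <- s) p.2) ->
  homogeneous_ideal R Rg I.
Proof.
move=> idI Isums; split=> // r /Isums[s [Rs ->]].
exists (collect s); split; first by apply: decomp_collect => p /Rs[].
by move=> _ /mapP[a _ ->]; apply: (ideal_sum idI) => p /Rs[].
Qed.

Lemma homogeneous_ideal_components I r x :
  homogeneous_ideal R Rg I -> I r -> components Rg r x -> I x.
Proof.
move=> [idI Idec] /Idec[s [rs Is]] /(components_hcomp rs)[a ->].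
by apply: (ideal_sum idI) => p /Is.
Qed.

Lemma span_homogeneous S : psubset S R -> psubset S (homogeneous Rg) ->
  homogeneous_ideal R Rg (span R S).
Proof.
move=> SR Sh; apply: homogeneous_idealW (span_ideal sR SR) _ => _ [s [Ss ->]].
elim: s Ss => [|[c x] s IH] Ss; first by exists [::]; split=> //; rewrite !big_nil.
have [t [tI tE]] : exists t : seq (G * K), (forall p, p \in t -> Rg p.1 p.2 /\ span R S p.2) /\
    \sum_(p <- s) p.1 * p.2 = \sum_(p <- t) p.2.
  by apply: IH => p ps; apply: Ss; rewrite inE ps orbT.
have [/= Rc Sx] := Ss _ (mem_head _ _).
have [a xa] := Sh x Sx; have [u [_ Ru cE]] := gd_sum gd Rc.
exists ([seq (q.1 + a, q.2 * x) | q <- u] ++ t).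
rewrite big_cat big_cons big_map tE {1}cE mulr_suml; split=> // p.
rewrite mem_cat => /orP[/mapP[q qu ->]|/tI//] /=; split; first exact: (gd_compM gd (Ru q qu) xa).
exact: (spanM sR (gd_compR gd (Ru q qu)) (span_gen sR Sx)).
Qed.

Lemma split_off_ideal I x : is_ideal R I -> R x -> ~ I x ->
  exists s : seq (G * K), [/\ uniq (map fst s), s != [::],
    forall p, p \in s -> Rg p.1 p.2 /\ ~ I p.2 & I (x - \sum_(p <- s) p.2)].
Proof.
move=> idI Rx nIx; have [s [us Rs xE]] := gd_sum gd Rx.
pose P (p : G * K) := `[< ~ I p.2 >].
have xE' : x - \sum_(p <- filter P s) p.2 = \sum_(p <- s | ~~ P p) p.2.
  by rewrite xE (bigID P) big_filter /= addrC addrK.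
have I_rest : I (\sum_(p <- s | ~~ P p) p.2).
  by apply: (ideal_sum idI) => p _ /asboolPn/contrapT.
exists (filter P s); split=> //; last by rewrite xE'.
- exact: subseq_uniq (map_subseq _ (filter_subseq P s)) us.
- by apply/eqP => sP0; apply: nIx; move: xE'; rewrite sP0 big_nil subr0 => ->.
- by move=> p; rewrite mem_filter => /andP[/asboolP nIp /Rs].
Qed.

Definition mul_decomp (s t : seq (G * K)) := [seq (p.1 + q.1, p.2 * q.2) | p <- s, q <- t].

Lemma sum_mul_decomp s t :
  \sum_(p <- mul_decomp s t) p.2 = (\sum_(p <- s) p.2) * \sum_(q <- t) q.2.
Proof. by rewrite big_allpairs_dep mulr_suml; apply: eq_bigr => p _; rewrite mulr_sumr. Qed.

Lemma Rg_mul_decomp s t :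
  (forall p, p \in s -> Rg p.1 p.2) -> (forall q, q \in t -> Rg q.1 q.2) ->
  forall p, p \in mul_decomp s t -> Rg p.1 p.2.
Proof.
by move=> Rs Rt _ /allpairsP[[p q] [ps qt ->]]; exact: (gd_compM gd (Rs p ps) (Rt q qt)).
Qed.

Lemma hcomp_mul_decomp s t a b :
  (forall a' b', a' \in map fst s -> b' \in map fst t -> a' + b' = a + b -> a' = a /\ b' = b) ->
  hcomp (mul_decomp s t) (a + b) = hcomp s a * hcomp t b.
Proof.
move=> ab_uniq; rewrite /hcomp big_mkcond big_allpairs_dep /= [in RHS]big_mkcond mulr_suml.
apply: eq_big_seq => p ps; rewrite [in RHS]big_mkcond mulr_sumr; apply: eq_big_seq => q qt /=.
have [sE|sE] := eqVneq (p.1 + q.1) (a + b).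
  by have [-> ->] := ab_uniq _ _ (map_f fst ps) (map_f fst qt) sE; rewrite !eqxx.
by case: eqP => pa; case: eqP => qb; rewrite ?mulr0 ?mul0r //; rewrite pa qb eqxx in sE.
Qed.

(* Drop the components lying in [I]: in the product of what remains, the degree [a + b]
   of unique representation has the single component [hcomp s a * hcomp t b]. *)
Lemma homogeneous_prime I : homogeneous_ideal R Rg I ->
  (forall a b x y, Rg a x -> Rg b y -> I (x * y) -> I x \/ I y) ->
  forall x y, R x -> R y -> I (x * y) -> I x \/ I y.
Proof.
move=> hI hprime x y Rx Ry Ixy; have idI := hI.1.
have [Ix|nIx] := pselect (I x); first by left.
have [Iy|nIy] := pselect (I y); first by right.
exfalso; have [s [us nzs Rs Ixs]] := split_off_ideal idI Rx nIx.
have [t [ut nzt Rt Iyt]] := split_off_ideal idI Ry nIy.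
set x' := \sum_(p <- s) p.2 in Ixs; set y' := \sum_(q <- t) q.2 in Iyt.
have Ix'y' : I (x' * y').
  have Rx' : R x' by apply: (subring_sum sR) => p /Rs[/(gd_compR gd)].
  have -> : x' * y' = x * y - x' * (y - y') - (x - x') * y by ring.
  apply: (idealB sR idI); first apply: (idealB sR idI Ixy).
    exact: (idealM idI Rx' Iyt).
  exact: (idealMr idI Ixs Ry).
have nz_fst (u : seq (G * K)) : u != [::] -> map fst u != [::] by rewrite -!size_eq0 size_map.
have [a [b [as_ bt ab_uniq]]] :=
  torsion_free_unique_sum (gd_torsion_free gd) (nz_fst _ nzs) (nz_fst _ nzt).
have [sa tb] := (hcomp_mem us as_, hcomp_mem ut bt).
have Rs' p : p \in s -> Rg p.1 p.2 by case/Rs.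
have Rt' q : q \in t -> Rg q.1 q.2 by case/Rt.
have : I (hcomp s a * hcomp t b).
  have := decomp_collect (Rg_mul_decomp Rs' Rt'); rewrite sum_mul_decomp => dec.
  have [u [du Iu]] := hI.2 _ Ix'y'.
  rewrite -hcomp_mul_decomp // -hcomp_collect (decomp_unique dec du).
  by apply: (ideal_sum idI) => p /Iu.
by case/(hprime a b _ _ (Rs' _ sa) (Rt' _ tb)); [exact: (Rs _ sa).2 | exact: (Rt _ tb).2].
Qed.

Lemma principal_homogeneous_ideal a h : Rg a h -> homogeneous_ideal R Rg (scale_set h R).
Proof.
move=> ha; have Rh := gd_compR gd ha.
have idhR : is_ideal R (scale_set h R).
  split; first by move=> _ [z [Rz ->]]; exact: (subringM sR Rh Rz).
  split; first by exists 0; rewrite mulr0; split=> //; exact: subring0 sR.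
    move=> _ _ [y [Ry ->]] [z [Rz ->]]; exists (y + z).
    by rewrite mulrDr; split=> //; exact: (subringD sR).
  by move=> r _ Rr [y [Ry ->]]; exists (r * y); rewrite mulrCA; split=> //; exact: (subringM sR).
apply: (homogeneous_idealW idhR) => _ [z [Rz ->]]; have [s [_ Rs ->]] := gd_sum gd Rz.
exists [seq (a + p.1, h * p.2) | p <- s]; rewrite big_map mulr_sumr; split=> // _ /mapP[p ps ->].
split; first exact: (gd_compM gd ha (Rs p ps)).
by exists p.2; split=> //; exact: (gd_compR gd (Rs p ps)).
Qed.

End Graded.

Section Semistar.
Variables (G : zmodType) (K : fieldType) (Gam : G -> Prop) (R : K -> Prop) (Rg : G -> K -> Prop)
  (star : (K -> Prop) -> (K -> Prop)).
Hypothesis gd : graded_domain Gam R Rg.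
Hypothesis ss : semistar R star.
Let sR := gd_subring gd.

Local Notation st := (stilde R star).
Local Notation gen l := (span R (fun y => y \in l)).

Lemma nz_submodR : nz_submod R R.
Proof.
by split; [exact: subring_submod sR | exists 1; split; [exact: subring1 sR | exact: oner_neq0]].
Qed.

Lemma nz_submod_ideal I : is_ideal R I -> (exists x, I x /\ x != 0) -> nz_submod R I.
Proof. by case. Qed.

Lemma fg_idealR : is_fg_ideal R R.
Proof.
have R1 := subring1 sR; exists [:: 1]; split=> [y|]; first by rewrite inE => /eqP ->.
apply: pred_ext => [x Rx|]; last first.
  by apply: span_min (subring_submod sR) _ => y; rewrite inE => /eqP ->.
by exists [:: (x, 1)]; rewrite big_seq1 mulr1; split=> // p; rewrite inE => /eqP ->; rewrite inE.
Qed.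

Lemma star_R1 : star R 1.
Proof. by apply: (ss_ext ss nz_submodR); exact: subring1 sR. Qed.

Lemma stilde_ext I : is_ideal R I -> psubset I (st I).
Proof.
move=> idI x Ix; exists R; split=> //; first exact: fg_idealR.
  by exists 1; split; [exact: subring1 sR | exact: oner_neq0].
by move=> j Rj; exact: (idealMr idI Ix Rj).
Qed.

Lemma star_full_above J E : nz_submod R J -> is_ideal R E -> psubset J E ->
  star J = star R -> star E = star R.
Proof.
move=> nzJ idE JE starJ.
have nzE : nz_submod R E.
  by case: nzJ => _ [x [Jx x_nz]]; split; [exact: idE.2 | exists x; split=> //; exact: JE].
apply: pred_ext; first by apply: (ss_mono ss nzE nz_submodR); case: idE.
by rewrite -starJ; apply: (ss_mono ss nzJ nzE).
Qed.

Lemma nz_submod_scale a E : a != 0 -> nz_submod R E -> nz_submod R (scale_set a E).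
Proof.
move=> a_nz [[E0 ED EM] [x [Ex x_nz]]]; split.
  2: by exists (a * x); rewrite mulf_neq0 //; split=> //; exists x.
split; first by exists 0; rewrite mulr0.
  by move=> _ _ [y [Ey ->]] [z [Ez ->]]; exists (y + z); rewrite mulrDr; split=> //; exact: ED.
by move=> r _ Rr [y [Ey ->]]; exists (r * y); rewrite mulrCA; split=> //; exact: EM.
Qed.

Definition full_gens (l : seq K) :=
  [/\ forall y, y \in l -> R y, exists x, gen l x /\ x != 0 & star (gen l) = star R].

Lemma stilde1P I : st I 1 <-> exists l, full_gens l /\ psubset (gen l) I.
Proof.
split=> [[_ [[l [lR ->]] nzJ starJ JI]]|[l [[lR nzl starl] lI]]].
  by exists l; split=> // j /JI; rewrite mul1r.
by exists (gen l); split=> //; [exists l | move=> j /lI; rewrite mul1r].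
Qed.

(* If [a * gen l2] lies in [J] then [a] lies in [star J], because [1] lies in
   [star (gen l2) = star R]. *)
Lemma full_gens_mul l1 l2 :
  full_gens l1 -> full_gens l2 -> full_gens [seq x * y | x <- l1, y <- l2].
Proof.
move=> [l1R [u [J1u u_nz]] starJ1] [l2R [v [J2v v_nz]] starJ2].
set J := gen [seq x * y | x <- l1, y <- l2].
have J_mul a b : gen l1 a -> gen l2 b -> J (a * b).
  move=> J1a J2b; apply: span_mono (span_mul sR J1a J2b) => _ [x [y [xl yl ->]]].
  exact: allpairs_f.
have JR z : z \in [seq x * y | x <- l1, y <- l2] -> R z.
  by case/allpairsP=> -[x y] [/l1R Rx /l2R Ry ->]; exact: (subringM sR Rx Ry).
have nzJuv : exists x, J x /\ x != 0.
  by exists (u * v); rewrite mulf_neq0 //; split=> //; exact: J_mul.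
have nzJ := nz_submod_ideal (span_ideal sR JR) nzJuv.
have nzJ1 : nz_submod R (gen l1) by apply: nz_submod_ideal (span_ideal sR l1R) _; exists u.
have nzJ2 : nz_submod R (gen l2) by apply: nz_submod_ideal (span_ideal sR l2R) _; exists v.
have J1_starJ : psubset (gen l1) (star J).
  move=> a J1a; have [->|a_nz] := eqVneq a 0; first by case: (ss_dom ss nzJ) => -[].
  have : scale_set a (star (gen l2)) a.
    by exists 1; rewrite mulr1 starJ2; split=> //; exact: star_R1.
  rewrite -(ss_scale ss a_nz nzJ2); apply: (ss_mono ss (nz_submod_scale a_nz nzJ2) nzJ).
  by move=> _ [b [J2b ->]]; exact: J_mul.
split=> //; apply: pred_ext; first by apply: (ss_mono ss nzJ nz_submodR); case: (span_ideal sR JR).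
rewrite -starJ1 -(ss_idem ss nzJ); exact: (ss_mono ss nzJ1 (ss_dom ss nzJ) J1_starJ).
Qed.

Definition hproper (B I : K -> Prop) := [/\ homogeneous_ideal R Rg I, psubset B I & ~ st I 1].

Lemma hproper_bigcup B (F : set (K -> Prop)) X0 :
  (forall X, F X -> hproper B X) -> total_on F subset -> F X0 ->
  hproper B (\bigcup_(X in F) X)%classic.
Proof.
move=> Fh Ftot FX0; set U := (\bigcup_(X in F) X)%classic.
have idU : is_ideal R U by apply: chain_bigcup_ideal Ftot FX0 => X /Fh[[]].
split.
- split=> // x [X FX Xx]; have [[_ Xdec] _ _] := Fh X FX.
  by have [s [xs sX]] := Xdec x Xx; exists s; split=> // p /sX; exists X.
- by case: (Fh X0 FX0) => _ BX0 _ x /BX0; exists X0.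
- case/stilde1P => l [fl lU].
  have [X FX lX] : exists2 X, F X & forall y, y \in l -> X y.
    by apply: chain_bigcup_seq Ftot FX0 _ => y yl; apply: lU; exact: (span_gen sR).
  have [[idX _] _ nstX] := Fh X FX.
  by apply: nstX; apply/stilde1P; exists l; split=> //; exact: (span_min idX.2 lX).
Qed.

(* [Zorn_bigcup] also bounds the empty chain, hence [set0] is admitted. *)
Lemma exists_maximal_hproper B : hproper B B ->
  exists M, hproper B M /\ forall I, hproper B I -> psubset M I -> I = M.
Proof.
move=> hpB; pose P (X : set K) := X = set0 \/ hproper B X.
have [|M [PM Mmax]] := @Zorn_bigcup K P.
  move=> F FP Ftot; pose F' := [set X | F X /\ hproper B X]%classic.
  have -> : (\bigcup_(X in F) X = \bigcup_(X in F') X)%classic.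
    apply: pred_ext => x [X FX Xx]; exists X => //; last by case: FX.
    by split=> //; case: (FP X FX) => // X0; rewrite X0 in Xx.
  have [[X0 F'X0]|noF'] := pselect (exists X, F' X); last first.
    by left; apply: pred_ext => x // [X F'X _]; case: noF'; exists X.
  by right; apply: hproper_bigcup F'X0 => [X []//|X Y [FX _] [FY _]]; exact: Ftot.
have hpM : hproper B M.
  case: PM => // M0; exfalso; apply: (Mmax B); last by right.
  rewrite M0; split=> // B0; apply: (B0 0); case: hpB => -[idB _] _ _; exact: ideal0 idB.
exists M; split=> // I hpI MI; apply: contrapT => IM; apply: (Mmax I); last by right.
by split=> // IM'; apply: IM; exact: pred_ext.
Qed.

Definition add_principal (I : K -> Prop) x := fun z => exists m r, [/\ I m, R r & z = m + x * r].

Lemma add_principal_sub I x : is_ideal R I -> psubset I (add_principal I x).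
Proof. by move=> idI m Im; exists m, 0; rewrite mulr0 addr0; split=> //; exact: subring0 sR. Qed.

Lemma add_principal_gen I x : is_ideal R I -> add_principal I x x.
Proof.
move=> idI; exists 0, 1; rewrite add0r mulr1.
by split=> //; [exact: ideal0 idI | exact: subring1 sR].
Qed.

Lemma add_principal_homogeneous I a x : homogeneous_ideal R Rg I -> Rg a x ->
  homogeneous_ideal R Rg (add_principal I x).
Proof.
move=> [idI Idec] xa; have Rx := gd_compR gd xa.
have idIx : is_ideal R (add_principal I x).
  split=> [_ [m [r [Im Rr ->]]]|].
    exact: (subringD sR (ideal_mem idI Im) (subringM sR Rx Rr)).
  split; first exact: (add_principal_sub x idI (ideal0 idI)).
    move=> _ _ [m1 [r1 [Im1 Rr1 ->]]] [m2 [r2 [Im2 Rr2 ->]]].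
    by exists (m1 + m2), (r1 + r2); split; [exact: (idealD idI) | exact: (subringD sR) | ring].
  move=> c _ Rc [m [r [Im Rr ->]]].
  by exists (c * m), (c * r); split; [exact: (idealM idI) | exact: (subringM sR) | ring].
apply: (homogeneous_idealW gd idIx) => _ [m [r [Im Rr ->]]].
have [s [[_ Rs ms] Is]] := Idec m Im; have [t [_ Rt rt]] := gd_sum gd Rr.
exists (s ++ [seq (a + q.1, x * q.2) | q <- t]).
rewrite big_cat big_map -ms rt mulr_sumr; split=> // p; rewrite mem_cat => /orP[ps|/mapP[q qt ->]].
  by split; [exact: Rs | exact: (add_principal_sub x idI (Is p ps))].
split; first exact: (gd_compM gd xa (Rt q qt)).
by exists 0, q.2; rewrite add0r; split=> //; [exact: ideal0 idI | exact: (gd_compR gd (Rt q qt))].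
Qed.

Section MaximalHproper.
Variable M : K -> Prop.
Hypotheses (hpM : hproper M M) (nzM : exists x, M x /\ x != 0)
  (maxM : forall I, hproper M I -> I = M).

Let hM : homogeneous_ideal R Rg M. Proof. by case: hpM. Qed.
Let idM : is_ideal R M. Proof. by case: hM. Qed.

Lemma maximal_hproper_add a x : Rg a x -> ~ M x -> st (add_principal M x) 1.
Proof.
move=> xa nMx; apply: contrapT => nst; apply: nMx.
rewrite -(maxM (I := add_principal M x)); first exact: add_principal_gen.
by split=> //; [exact: add_principal_homogeneous xa | exact: add_principal_sub].
Qed.

(* [M + xR] and [M + yR] contain ideals [gen l1] and [gen l2] with [full_gens]; so does
   their product, which lies in [M] since [x * y] does. *)
Lemma maximal_hproper_hprime a b x y : Rg a x -> Rg b y -> M (x * y) -> M x \/ M y.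
Proof.
move=> xa yb Mxy; apply: contrapT => /not_orP[nMx nMy].
have [l1 [fl1 l1M]] := proj1 (stilde1P _) (maximal_hproper_add xa nMx).
have [l2 [fl2 l2M]] := proj1 (stilde1P _) (maximal_hproper_add yb nMy).
have [_ _ nstM] := hpM; apply: nstM; apply/stilde1P.
exists [seq u * v | u <- l1, v <- l2]; split; first exact: full_gens_mul.
apply: (span_min idM.2) => _ /allpairsP[[u v] [ul vl ->]] /=.
have [m [r [Mm Rr ->]]] := l1M u (span_gen sR ul).
have [m' [r' [Mm' Rr' ->]]] := l2M v (span_gen sR vl).
have [Rx Ry] := (gd_compR gd xa, gd_compR gd yb).
have -> : (m + x * r) * (m' + y * r') = m * (m' + y * r') + m' * (x * r) + r * r' * (x * y) by ring.
apply: (idealD idM); first apply: (idealD idM).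
- by apply: (idealMr idM Mm); apply: (subringD sR (ideal_mem idM Mm') (subringM sR Ry Rr')).
- exact: (idealMr idM Mm' (subringM sR Rx Rr)).
- exact: (idealM idM (subringM sR Rr Rr') Mxy).
Qed.

Lemma maximal_hproper_prime x y : R x -> R y -> M (x * y) -> M x \/ M y.
Proof. exact: (homogeneous_prime gd hM maximal_hproper_hprime). Qed.

Lemma maximal_hproper_quasi : quasi_ideal R st M.
Proof.
have [_ _ nstM] := hpM; split=> //.
apply: pred_ext => [z [[_ [[l [lR ->]] nzl starl lz]] Rz]|z Mz]; last first.
  by split; [exact: (stilde_ext idM) | exact: (ideal_mem idM)].
have [[j lj nMj]|l_M] := pselect (exists2 j, j \in l & ~ M j).
  by case: (maximal_hproper_prime Rz (lR j lj) (lz j (span_gen sR lj))).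
case: nstM; apply/stilde1P; exists l; split=> //.
by apply: (span_min idM.2) => j lj; apply: contrapT => nMj; apply: l_M; exists j.
Qed.

Lemma maximal_hproper_hQMax : hQMax R Rg st M.
Proof.
have [_ _ nstM] := hpM; have nM1 : ~ M 1 by move/(stilde_ext idM).
split=> [|I [qI hI nI1] MI]; first by split=> //; exact: maximal_hproper_quasi.
apply: maxM; split=> // stI1; apply: nI1; case: qI => _ _ <-.
by split=> //; exact: subring1 sR.
Qed.

End MaximalHproper.

Lemma exists_hQMax_above B : homogeneous_ideal R Rg B -> (exists x, B x /\ x != 0) -> ~ st B 1 ->
  exists Q, hQMax R Rg st Q /\ psubset B Q.
Proof.
move=> hB [x [Bx x_nz]] nstB.
have [M [[hM BM nstM] Mmax]] := exists_maximal_hproper (And3 hB (fun y By => By) nstB).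
exists M; split=> //; apply: maximal_hproper_hQMax => [||I [hI MI nstI]].
- by split.
- by exists x; split=> //; exact: BM.
- by apply: Mmax => //; split=> // y /BM/MI.
Qed.

Section HQMax.
Variable Q : K -> Prop.
Hypothesis hQ : hQMax R Rg st Q.

Lemma hQMax_homogeneous : homogeneous_ideal R Rg Q. Proof. by case: hQ => -[]. Qed.
Lemma hQMax_ideal : is_ideal R Q. Proof. by case: hQMax_homogeneous. Qed.
Lemma hQMax_proper : ~ Q 1. Proof. by case: hQ => -[]. Qed.

Lemma hQMax_stilde1 : ~ st Q 1.
Proof.
case: hQ => -[[_ _ Qquasi] _ nQ1] _ stQ1; apply: nQ1; rewrite -Qquasi.
by split=> //; exact: subring1 sR.
Qed.

Lemma hQMax_maximal I : hproper Q I -> I = Q.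
Proof.
move=> [hI QI nstI]; have [[[_ [x [Qx x_nz]] _] _ _] Qmax] := hQ.
have [Q' [hQ' IQ']] := exists_hQMax_above hI (ex_intro _ x (conj (QI x Qx) x_nz)) nstI.
have Q'Q : Q' = Q by apply: Qmax; [case: hQ' | move=> y /QI/IQ'].
by apply: pred_ext => // y /IQ'; rewrite Q'Q.
Qed.

Lemma hQMax_prime x y : R x -> R y -> Q (x * y) -> Q x \/ Q y.
Proof.
apply: (maximal_hproper_prime _ hQMax_maximal).
by split=> //; [exact: hQMax_homogeneous | exact: hQMax_stilde1].
Qed.

End HQMax.

(* With no h-QMax ideal every homogeneous principal ideal [hR] has [1] in its ~star,
   so [1 \in h R^star] and [R_H] is contained in [R^star]. *)
Lemma exists_hQMax : psubset (star R) (RH R Rg) -> star R <> RH R Rg ->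
  exists Q, hQMax R Rg st Q.
Proof.
move=> starR_RH starR_neq; apply: contrapT => no_hQMax; apply: starR_neq.
apply: pred_ext => // _ [a [h [Ra [h_nz [c hc]] ->]]].
pose B := scale_set h R; have hB := principal_homogeneous_ideal gd hc.
have stB : st B 1.
  apply: contrapT => nstB; apply: no_hQMax.
  have [|Q [hQ _]] := exists_hQMax_above hB _ nstB; last by exists Q.
  by exists h; split=> //; exists 1; rewrite mulr1; split=> //; exact: subring1 sR.
have [l [[lR nzl starl] lB]] := proj1 (stilde1P B) stB.
have starB := star_full_above (nz_submod_ideal (span_ideal sR lR) nzl) hB.1 lB starl.
have : star B 1 by rewrite starB; exact: star_R1.
rewrite /B (ss_scale ss h_nz nz_submodR) => -[z [starz zE]].
have -> : h^-1 = z by apply: (mulfI h_nz); rewrite mulfV.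
by case: (ss_dom ss nz_submodR) => -[_ _ starM] _; exact: starM.
Qed.

End Semistar.

Lemma polysC (K : fieldType) (D : K -> Prop) c : D 0 -> D c -> polys D c%:P.
Proof. by move=> D0 Dc i; rewrite coefC; case: eqP. Qed.

Lemma exists_first_coef_notin (K : fieldType) (D : K -> Prop) (f : {poly K}) : ~ polys D f ->
  exists i, ~ D f`_i /\ forall k, (k < i)%N -> D f`_k.
Proof.
move=> nDf; have ex_i : exists i, `[< ~ D f`_i >].
  apply: contrapT => no_i; apply: nDf => i; apply: contrapT => nDi; apply: no_i.
  by exists i; apply/asboolP.
case: (ex_minnP ex_i) => i /asboolP nDi i_min; exists i; split=> // k ki.
by apply: contrapT => nDk; move: (i_min k (asboolT nDk)); rewrite leqNgt ki.
Qed.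

Section Polys.
Variables (K : fieldType) (R : K -> Prop).
Hypothesis sR : is_subring R.

Lemma polysXn n : polys R 'X^n.
Proof. by move=> i; rewrite coefXn; case: eqP => _; [exact: subring1 sR | exact: subring0 sR]. Qed.

Lemma polysX : polys R 'X.
Proof. by move=> i; rewrite coefX; case: eqP => _; [exact: subring1 sR | exact: subring0 sR]. Qed.

Lemma polys_subring : is_subring (polys R).
Proof.
split=> [|f g fR gR i|f g fR gR i]; first exact: polysC (subring0 sR) (subring1 sR).
  by rewrite coefB; exact: (subringB sR).
by rewrite coefM; apply: (subring_sum sR) => k _ _; exact: (subringM sR).
Qed.

Variable Q : K -> Prop.
Hypothesis idQ : is_ideal R Q.

Lemma polys_ideal : is_ideal (polys R) (polys Q).
Proof.
split=> [f fQ i|]; first exact: (ideal_mem idQ).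
split=> [i|f g fQ gQ i|f g fR gQ i]; first by rewrite coef0; exact: ideal0 idQ.
  by rewrite coefD; exact: (idealD idQ).
by rewrite coefM; apply: (ideal_sum idQ) => k _ _; exact: (idealM idQ).
Qed.

(* Gauss: modulo [Q], the coefficient of [f * g] in degree [i + j] is the product of the
   first coefficients [f`_i] and [g`_j] of [f] and [g] outside [Q]. *)
Lemma polys_prime :
  (forall x y, R x -> R y -> Q (x * y) -> Q x \/ Q y) ->
  forall f g, polys R f -> polys R g -> polys Q (f * g) -> polys Q f \/ polys Q g.
Proof.
move=> Qprime f g fR gR Qfg; apply: contrapT => /not_orP[/exists_first_coef_notin[i [nQfi fQ]]].
move=> /exists_first_coef_notin[j [nQgj gQ]].
have i_lt : (i < (i + j).+1)%N by rewrite ltnS leq_addr.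
have := Qfg (i + j)%N; rewrite coefM (bigD1 (Ordinal i_lt)) //= addKn => Qsum.
set rest := \sum_(k < _ | _) _ in Qsum.
have Qrest : Q rest.
  apply: (ideal_sum idQ) => k _ ki; have [k_lt|k_ge] := ltnP k i.
    exact: (idealMr idQ (fQ _ k_lt) (gR _)).
  apply: (idealM idQ (fR _)); apply: gQ.
  have : k != i :> nat by apply: contra ki => /eqP ki_eq; apply/eqP/val_inj.
  by have := ltn_ord k; lia.
have : Q (f`_i * g`_j) by rewrite -(addrK rest (f`_i * g`_j)); exact: (idealB sR idQ).
by case/(Qprime _ _ (fR i) (gR j)).
Qed.

End Polys.

Section Content.
Variables (G : zmodType) (K : fieldType) (Gam : G -> Prop) (R : K -> Prop) (Rg : G -> K -> Prop).
Hypothesis gd : graded_domain Gam R Rg.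
Let sR := gd_subring gd.

Local Notation A := (Af R Rg).

Lemma Af_ideal f : is_ideal R (A f).
Proof. by apply: (span_ideal sR) => x [i /(components_R gd)]. Qed.

Lemma Af_homogeneous f : homogeneous_ideal R Rg (A f).
Proof.
apply: (span_homogeneous gd) => x [i]; first exact: (components_R gd).
exact: components_homogeneous.
Qed.

Lemma Af_coef f i : polys R f -> A f f`_i.
Proof. by move=> fR; apply: span_mono (span_components gd (fR i)) => x; exists i. Qed.

Lemma Af0 x : A 0 x -> x = 0.
Proof.
have zero_submod : is_submod R (fun y : K => y = 0).
  by split=> // [_ _ -> ->|r _ _ ->]; rewrite ?addr0 ?mulr0.
by apply: (span_min zero_submod) => y [i]; rewrite coef0 => /(components0 gd).
Qed.

Lemma Af_nz f : polys R f -> f != 0 -> exists x, A f x /\ x != 0.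
Proof.
by move=> fR f_nz; exists (lead_coef f); rewrite lead_coef_eq0; split=> //; exact: Af_coef.
Qed.

Lemma Af_sub f Q : homogeneous_ideal R Rg Q -> polys Q f -> psubset (A f) Q.
Proof.
move=> hQ fQ; apply: (span_min hQ.1.2) => y [i].
exact: (homogeneous_ideal_components gd hQ (fQ i)).
Qed.

Lemma Af_fg f : polys R f -> is_fg_ideal R (A f).
Proof.
move=> fR; have dec i : {s | is_decomp Rg f`_i s} by apply: cid; exact: (gd_sum gd (fR i)).
pose l := flatten [seq map snd (sval (dec i)) | i <- iota 0 (size f)].
have l_comp y : y \in l -> exists i, components Rg f`_i y.
  case/flatten_mapP => i _ /mapP[p ps ->]; exists i, (sval (dec i)).
  by split; [exact: svalP | exists p.1; case: p ps].
exists l; split=> [y /l_comp[i /(components_R gd)]//|].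
apply: pred_ext; last first.
  by apply: (span_min (Af_ideal f).2) => y /l_comp[i ci]; apply: (span_gen sR); exists i.
apply: (span_min (span_submod _ sR)) => y [i ci].
have [i_lt|i_ge] := ltnP i (size f); last first.
  by move: ci; rewrite nth_default // => /(components0 gd) ->; exact: span0.
have [a ->] := components_hcomp gd (svalP (dec i)) ci.
apply: span_sum => p ps _; apply: (span_gen sR); apply/flatten_mapP.
by exists i; [rewrite mem_iota | exact: map_f].
Qed.

End Content.

Definition coefs_in (K : fieldType) (h1 h : {poly K}) := forall i, exists j, h`_j = h1`_i.

Lemma Af_coefs_in (G : zmodType) (K : fieldType) (R : K -> Prop) (Rg : G -> K -> Prop) h1 h :
  coefs_in h1 h -> psubset (Af R Rg h1) (Af R Rg h).
Proof. by move=> h1h; apply: span_mono => y [i ci]; have [j hj] := h1h i; exists j; rewrite hj. Qed.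

Section NStar.
Variables (G : zmodType) (K : fieldType) (Gam : G -> Prop) (R : K -> Prop) (Rg : G -> K -> Prop)
  (star : (K -> Prop) -> (K -> Prop)).
Hypotheses (gd : graded_domain Gam R Rg) (ss : semistar R star).
Let sR := gd_subring gd.

Local Notation st := (stilde R star).
Local Notation hQ := (hQMax R Rg st).
Local Notation N := (Nstar R Rg star).
Local Notation A := (Af R Rg).

(* This is all that is used of [R^star <> R_H]. *)
Hypothesis exists_hQ : exists Q, hQ Q.

Lemma Nstar_hQMax f : N f <-> polys R f /\ ~ (exists Q, hQ Q /\ polys Q f).
Proof.
split=> [[fR f_nz starA]|[fR noQ]].
  split=> // -[Q [hQ fQ]]; apply: (hQMax_stilde1 gd hQ); apply/stilde1P.
  have [l [lR Al]] := Af_fg gd fR; exists l; rewrite /full_gens -Al.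
  split; first by split=> //; exact: (Af_nz gd fR f_nz).
  exact: (Af_sub gd (hQMax_homogeneous hQ) fQ).
have f_nz : f != 0.
  apply: contra_notN noQ => /eqP f0; have [Q hQ] := exists_hQ; exists Q; split=> // i.
  by rewrite f0 coef0; exact: ideal0 (hQMax_ideal hQ).
split=> //; have [stA|nstA] := pselect (st (A f) 1).
  have [l [[lR nzl starl] lA]] := proj1 (stilde1P _ _ _) stA.
  exact: (star_full_above gd ss (nz_submod_ideal (span_ideal sR lR) nzl) (Af_ideal gd f) lA starl).
have [Q [hQ AQ]] := exists_hQMax_above gd ss (Af_homogeneous gd f) (Af_nz gd fR f_nz) nstA.
by case: noQ; exists Q; split=> // i; apply: AQ; exact: (Af_coef gd i fR).
Qed.

Lemma NstarM f g : N f -> N g -> N (f * g).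
Proof.
move=> /Nstar_hQMax[fR noQf] /Nstar_hQMax[gR noQg]; apply/Nstar_hQMax.
split=> [|[Q [hQ fgQ]]]; first exact: (subringM (polys_subring sR)).
case: (polys_prime sR (hQMax_ideal hQ) (hQMax_prime gd ss hQ) fR gR fgQ) => [fQ|gQ].
  by apply: noQf; exists Q.
by apply: noQg; exists Q.
Qed.

Lemma Nstar1 : N 1.
Proof.
apply/Nstar_hQMax; split=> [|[Q [hQ Q1]]]; first exact: (subring1 (polys_subring sR)).
by apply: (hQMax_proper hQ); have := Q1 0%N; rewrite coef1.
Qed.

Section Cone.
Variable P : {poly K} -> Prop.
Hypotheses (PR : psubset P (polys R)) (P0 : P 0) (PD : forall f g, P f -> P g -> P (f + g))
  (PX : forall f, P f -> P ('X * f)).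

Lemma cone_merge h1 h2 : P h1 -> P h2 -> exists h, [/\ P h, coefs_in h1 h & coefs_in h2 h].
Proof.
move=> Ph1 Ph2; have PXn n f : P f -> P ('X^n * f).
  by elim: n => [|n IH] Pf; rewrite ?expr0 ?mul1r // exprS -mulrA; exact/PX/IH.
exists (h1 + 'X^(size h1) * h2); split; first exact/PD/PXn.
  move=> i; have [i_lt|i_ge] := ltnP i (size h1).
    by exists i; rewrite coefD coefXnM i_lt addr0.
  by exists (size (h1 + 'X^(size h1) * h2)); rewrite !nth_default.
move=> i; exists (size h1 + i)%N; rewrite coefD coefXnM ltnNge leq_addr /= addKn.
by rewrite nth_default ?add0r // leq_addr.
Qed.

Let C := span R (fun c => exists f i, P f /\ components Rg f`_i c).

Lemma cone_content_Af y : C y -> exists h, P h /\ A h y.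
Proof.
have AP_submod : is_submod R (fun y => exists h, P h /\ A h y).
  split; first by exists 0; split=> //; exact: span0.
    move=> y1 y2 [h1 [Ph1 Ay1]] [h2 [Ph2 Ay2]]; have [h [Ph h1h h2h]] := cone_merge Ph1 Ph2.
    exists h; split=> //.
    exact: (idealD (Af_ideal gd h) (Af_coefs_in h1h Ay1) (Af_coefs_in h2h Ay2)).
  by move=> r z Rr [h [Ph Az]]; exists h; split=> //; exact: (idealM (Af_ideal gd h) Rr Az).
apply: (span_min AP_submod) => c [f [i [Pf ci]]].
by exists f; split=> //; apply: (span_gen sR); exists i.
Qed.

Lemma cone_content_seq_Af (l : seq K) : (forall y, y \in l -> C y) ->
  exists h, P h /\ forall y, y \in l -> A h y.
Proof.
elim: l => [|y l IH] lC; first by exists 0.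
have [h1 [Ph1 Ay]] := cone_content_Af (lC y (mem_head _ _)).
have [h2 [Ph2 Al]] : exists h, P h /\ forall z, z \in l -> A h z.
  by apply: IH => z zl; apply: lC; rewrite inE zl orbT.
have [h [Ph h1h h2h]] := cone_merge Ph1 Ph2; exists h; split=> // z.
by rewrite inE => /predU1P[->|/Al]; apply: Af_coefs_in.
Qed.

(* A finitely generated subideal of the content ideal [C] of [P] lies in a single [A h]
   with [h] in [P]; hence [1 \notin C^~star]. *)
Lemma exists_hQMax_above_cone : (forall f, P f -> ~ N f) -> exists Q, hQ Q /\ psubset P (polys Q).
Proof.
move=> PN; have C_coef f i : P f -> C f`_i.
  by move=> Pf; apply: span_mono (span_components gd (PR Pf i)) => c ci; exists f, i.
have [[y [Cy y_nz]]|C0] := pselect (exists y, C y /\ y != 0); last first.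
  have [Q hQ] := exists_hQ; exists Q; split=> // f Pf i.
  have -> : f`_i = 0.
    by apply: contrapT => fi_nz; apply: C0; exists f`_i; split; [exact: C_coef | exact/eqP].
  exact: ideal0 (hQMax_ideal hQ).
have hC : homogeneous_ideal R Rg C.
  apply: (span_homogeneous gd) => c [f [i [_ ci]]]; first exact: (components_R gd ci).
  exact: components_homogeneous ci.
have nstC : ~ st C 1.
  case/stilde1P => l [[lR nzl starl] lC].
  have [h [Ph lA]] := cone_content_seq_Af (fun y yl => lC y (span_gen sR yl)).
  have genA : psubset (span R (fun y => y \in l)) (A h) := span_min (Af_ideal gd h).2 lA.
  apply: (PN h Ph); split; first exact: PR.
    apply: contraTneq isT => h0; case: nzl => x [lx x_nz].
    by move: (genA x lx); rewrite h0 => /(Af0 gd) x0; rewrite x0 eqxx in x_nz.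
  have nzl' := nz_submod_ideal (span_ideal sR lR) nzl.
  exact: (star_full_above gd ss nzl' (Af_ideal gd h) genA starl).
have [Q [hQ CQ]] := exists_hQMax_above gd ss hC (ex_intro _ y (conj Cy y_nz)) nstC.
by exists Q; split=> // f Pf i; apply: CQ; exact: C_coef.
Qed.

End Cone.

End NStar.

HB.instance Definition _ (K : fieldType) := GRing.RMorphism.copy (@toFX K) (@tofrac _).

Lemma toFX_eq0 (K : fieldType) (f : {poly K}) : (toFX f == 0) = (f == 0).
Proof. exact: tofrac_eq0. Qed.

Lemma toFX_inj (K : fieldType) : injective (@toFX K).
Proof. by move=> f g /eqP; rewrite tofrac_eq => /eqP. Qed.

Section Nagata.
Variables (G : zmodType) (K : fieldType) (Gam : G -> Prop) (R : K -> Prop) (Rg : G -> K -> Prop)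
  (star : (K -> Prop) -> (K -> Prop)).
Hypotheses (gd : graded_domain Gam R Rg) (ss : semistar R star).
Let sR := gd_subring gd.

Local Notation st := (stilde R star).
Local Notation hQ := (hQMax R Rg st).
Local Notation N := (Nstar R Rg star).
Local Notation NA := (NA R Rg star).
Local Notation E := (ext_ideal NA).

Hypothesis exists_hQ : exists Q, hQ Q.

Lemma Nstar_toFX_neq0 g : N g -> toFX g != 0.
Proof. by case=> _ g_nz _; rewrite toFX_eq0. Qed.

Let spR := polys_subring sR.

Lemma NA_poly f : polys R f -> NA (toFX f).
Proof.
by move=> fR; exists f, 1; rewrite rmorph1 divr1; split=> //; exact: (Nstar1 gd ss exists_hQ).
Qed.

Lemma NA_subring : is_subring NA.
Proof.
split; first by rewrite -(rmorph1 (@toFX K)); exact/NA_poly/(subring1 spR).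
  move=> _ _ [f1 [g1 [f1R Ng1 ->]]] [f2 [g2 [f2R Ng2 ->]]].
  exists (f1 * g2 - f2 * g1), (g1 * g2); split.
  - by apply: (subringB spR); apply: (subringM spR) => //; [case: Ng2 | case: Ng1].
  - exact: (NstarM gd ss exists_hQ).
  - by rewrite -mulNr addf_div ?Nstar_toFX_neq0 // rmorphB !rmorphM mulNr.
move=> _ _ [f1 [g1 [f1R Ng1 ->]]] [f2 [g2 [f2R Ng2 ->]]].
exists (f1 * f2), (g1 * g2); split; [exact: (subringM spR) | exact: (NstarM gd ss exists_hQ) |].
by rewrite !rmorphM mulf_div.
Qed.

Lemma NA_inv_Nstar g : N g -> NA (toFX g)^-1.
Proof. by move=> Ng; exists 1, g; rewrite rmorph1 div1r; split=> //; exact: (subring1 spR). Qed.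

Definition Nfrac (D : K -> Prop) z := exists f g, [/\ polys D f, N g & z = toFX f / toFX g].

Section ExtIdeal.
Variable Q : K -> Prop.
Hypothesis idQ : is_ideal R Q.
Let ipQ := polys_ideal idQ.

Lemma ext_ideal_frac z : E Q z -> Nfrac Q z.
Proof.
case=> s [sE ->]; apply: (closed_sum (S := Nfrac Q)).
- exists 0, 1; rewrite rmorph0 mul0r; split=> //; first exact: ideal0 ipQ.
  exact: (Nstar1 gd ss exists_hQ).
- move=> _ _ [f1 [g1 [f1Q Ng1 ->]]] [f2 [g2 [f2Q Ng2 ->]]].
  exists (f1 * g2 + f2 * g1), (g1 * g2); split.
  + by apply: (idealD ipQ); apply: (idealMr ipQ) => //; [case: Ng2 | case: Ng1].
  + exact: (NstarM gd ss exists_hQ).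
  + by rewrite addf_div ?Nstar_toFX_neq0 // rmorphD !rmorphM.
move=> p /sE[[f [g [fR Ng ->]]] [q [Qq ->]]] _.
exists (q%:P * f), g; split=> //; last first.
  by rewrite rmorphM /= mulrAC [toFX f * _]mulrC.
exact: (idealMr ipQ (polysC (ideal0 idQ) Qq) fR).
Qed.

Lemma frac_ext_ideal f g : polys Q f -> N g -> E Q (toFX f / toFX g).
Proof.
move=> fQ Ng; exists [seq (toFX 'X^i / toFX g, toFX (f`_i)%:P) | i <- index_iota 0 (size f)].
split=> [_ /mapP[i _ ->]|].
  by split; [exists 'X^i, g; split=> //; exact: (polysXn sR) | exists f`_i].
rewrite big_map big_mkord /=; under eq_bigr do rewrite mulrAC.
rewrite -mulr_suml; congr (_ / _); rewrite -[in LHS](coefK f) poly_def rmorph_sum.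
by apply: eq_bigr => i _; rewrite -mul_polyC rmorphM mulrC.
Qed.

Lemma ext_ideal_ideal : is_ideal NA (E Q).
Proof.
split; last exact: (span_submod _ NA_subring).
apply: (span_min (subring_submod NA_subring)) => _ [q [Qq ->]].
exact: (NA_poly (polysC (subring0 sR) (ideal_mem idQ Qq))).
Qed.

End ExtIdeal.

Lemma ext_ideal_proper Q : hQ Q -> ~ E Q 1.
Proof.
move=> hQ /(ext_ideal_frac (hQMax_ideal hQ))[f [g [fQ Ng fgE]]].
have gf : g = f by apply: toFX_inj; rewrite -[toFX g]mul1r fgE divfK ?Nstar_toFX_neq0.
by case/(Nstar_hQMax gd ss exists_hQ): Ng => _; apply; exists Q; rewrite gf.
Qed.

Lemma exists_hQMax_above_contraction I : is_ideal NA I -> ~ I 1 ->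
  exists Q, hQ Q /\ forall f, polys R f -> I (toFX f) -> polys Q f.
Proof.
move=> idI nI1.
have [||f [fR If]|f [fR If]|Q [hQ PQ]] := exists_hQMax_above_cone gd ss exists_hQ
  (P := fun f => polys R f /\ I (toFX f)) (fun f => @proj1 _ _).
- by split; [exact: (subring0 spR) | rewrite rmorph0; exact: ideal0 idI].
- move=> f g [fR If] [gR Ig]; split; first exact: (subringD spR).
  by rewrite rmorphD; exact: (idealD idI).
- split; first exact: (subringM spR (polysX sR) fR).
  by rewrite rmorphM; apply: (idealM idI (NA_poly (polysX sR)) If).
- move=> Nf; apply: nI1; rewrite -(mulfV (Nstar_toFX_neq0 Nf)).
  exact: (idealMr idI If (NA_inv_Nstar Nf)).
by exists Q; split=> // f fR If; exact: PQ.
Qed.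

Lemma ideal_sub_ext I Q : is_ideal NA I ->
  (forall f, polys R f -> I (toFX f) -> polys Q f) -> psubset I (E Q).
Proof.
move=> idI IQ z Iz; have [f [g [fR Ng zE]]] := ideal_mem idI Iz.
rewrite zE; apply: (frac_ext_ideal _ Ng); apply: (IQ _ fR).
have -> : toFX f = toFX g * z by rewrite zE mulrCA mulfV ?mulr1 //; exact: (Nstar_toFX_neq0 Ng).
by apply: (idealM idI) Iz; apply: NA_poly; case: Ng.
Qed.

Lemma maximal_ext_ideal Q : hQ Q -> is_maximal_ideal NA (E Q).
Proof.
move=> hQ; have idQ := hQMax_ideal hQ.
split=> [||I idI nI1 QI]; [exact: ext_ideal_ideal | exact: ext_ideal_proper |].
have [Q' [hQ' IQ']] := exists_hQMax_above_contraction idI nI1.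
have QQ' : psubset Q Q'.
  move=> q Qq; have qR := ideal_mem idQ Qq.
  have /(IQ' _ (polysC (subring0 sR) qR)) /(_ 0%N) : I (toFX q%:P).
    by apply: QI; apply: (span_gen NA_subring); exists q.
  by rewrite coefC.
have Q'Q : Q' = Q by case: hQ => _; apply; [case: hQ' | exact: QQ'].
by rewrite Q'Q in IQ'; apply: pred_ext => //; exact: ideal_sub_ext.
Qed.

Lemma maximal_ideal_ext M : is_maximal_ideal NA M -> exists Q, hQ Q /\ M = E Q.
Proof.
move=> [idM nM1 Mmax]; have [Q [hQ MQ]] := exists_hQMax_above_contraction idM nM1.
exists Q; split=> //; apply: esym; apply: Mmax; last exact: ideal_sub_ext.
  exact: ext_ideal_ideal (hQMax_ideal hQ).
exact: ext_ideal_proper.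
Qed.

Definition denominator z (g : {poly K}) := polys R g /\ exists f, polys R f /\ toFX g * z = toFX f.

Section Localization.
Variable Q : K -> Prop.
Hypothesis hQ : hQ Q.
Let idQ := hQMax_ideal hQ.

Lemma notin_hQMax_neq0 s : ~ Q s -> s != 0.
Proof. by apply: contra_notN => /eqP->; exact: ideal0 idQ. Qed.

Lemma loc_R x : R x -> loc R Q x.
Proof.
move=> Rx; exists x, 1; rewrite divr1.
by split=> //; [exact: subring1 sR | exact: (hQMax_proper hQ)].
Qed.

Lemma loc_common_denominator (l : seq K) : (forall x, x \in l -> loc R Q x) ->
  exists t, [/\ R t, ~ Q t & forall x, x \in l -> R (t * x)].
Proof.
elim: l => [|x l IH] lQ.
  by exists 1; split=> //; [exact: subring1 sR | exact: (hQMax_proper hQ)].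
have [t [Rt nQt tl]] : exists t, [/\ R t, ~ Q t & forall y, y \in l -> R (t * y)].
  by apply: IH => y yl; apply: lQ; rewrite inE yl orbT.
have [a [s [Ra Rs nQs ->]]] := lQ x (mem_head _ _).
exists (s * t); split; first exact: (subringM sR).
  by case/(hQMax_prime gd ss hQ Rs Rt).
move=> y; rewrite inE => /predU1P[->|/tl ty]; last by rewrite -mulrA; exact: (subringM sR).
by rewrite mulrC mulrA divfK ?notin_hQMax_neq0 //; exact: (subringM sR).
Qed.

Lemma NA_nagata z : NA z -> nagata (loc R Q) z.
Proof.
move=> [f [g [fR Ng ->]]]; have [gR _ _] := Ng.
have [i [nQgi _]] : exists i, ~ Q g`_i /\ forall k, (k < i)%N -> Q g`_k.
  apply: exists_first_coef_notin => gQ.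
  by case/(Nstar_hQMax gd ss exists_hQ): Ng => _; apply; exists Q.
exists f, g; split=> [j|j||//]; [exact: loc_R | exact: loc_R |].
exists [:: ((g`_i)^-1, g`_i)]; rewrite big_seq1 mulVf ?notin_hQMax_neq0 //; split=> // p.
rewrite inE => /eqP -> /=; split; last by exists i.
by exists 1, g`_i; rewrite div1r; split=> //; exact: subring1 sR.
Qed.

(* Clearing the denominators of [z = F / D] over [R_Q] by some [t] outside [Q] gives the
   denominator [t D] of [z]; were it in [Q[X]], writing [1] as an [R_Q]-combination of the
   coefficients of [D] would put [t * t] in [Q]. *)
Lemma nagata_denominator_notin z : nagata (loc R Q) z -> exists g, denominator z g /\ ~ polys Q g.
Proof.
case=> [F [D [FQ DQ [s [sD sum1] zE]]]].
pose l := [seq F`_j | j <- iota 0 (size F)] ++ [seq D`_j | j <- iota 0 (size D)] ++ map fst s.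
have [|t [Rt nQt tl]] := loc_common_denominator (l := l).
  move=> x; rewrite !mem_cat => /or3P[/mapP[j _ ->]|/mapP[j _ ->]|/mapP[p /sD[sp _] ->]] //.
have tR (H : {poly K}) : (forall j, (j < size H)%N -> R (t * H`_j)) -> polys R (t *: H).
  move=> tH j; rewrite coefZ; have [j_lt|j_ge] := ltnP j (size H); first exact: tH.
  by rewrite nth_default // mulr0; exact: subring0 sR.
have D_nz : D != 0.
  apply/eqP => D0; move: sum1; rewrite big1_seq => [/eqP|p /andP[_ /sD[_ [i ->]]]].
    by rewrite oner_eq0.
  by rewrite D0 coef0 mulr0.
exists (t *: D); split.
  split; first by apply: tR => j j_lt; apply: tl; rewrite !mem_cat map_f ?orbT ?mem_iota.
  exists (t *: F); split; first by apply: tR => j j_lt; apply: tl; rewrite mem_cat map_f ?mem_iota.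
  by rewrite -!mul_polyC !rmorphM /= zE -mulrA [toFX D * _]mulrCA mulfV ?mulr1 // toFX_eq0.
move=> tDQ; apply: nQt; case: (hQMax_prime gd ss hQ Rt Rt) => //.
rewrite -[t * t]mulr1 sum1 mulr_sumr; apply: (ideal_sum idQ) => p ps _.
have [_ [i ->]] := sD p ps; rewrite mulrACA.
by apply: (idealM idQ); [apply: tl; rewrite !mem_cat map_f ?orbT | have := tDQ i; rewrite coefZ].
Qed.

End Localization.

Lemma nagata_NA z : (forall Q, hQ Q -> nagata (loc R Q) z) -> NA z.
Proof.
move=> zQ; have [[g [[gR [f [fR gz]]] Ng]]|noN] := pselect (exists g, denominator z g /\ N g).
  by exists f, g; split=> //; rewrite -gz mulrAC mulfV ?mul1r //; exact: Nstar_toFX_neq0.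
have [||g [gR [f [fR gz]]]|g Pg Ng|Q [hQ PQ]] :=
  exists_hQMax_above_cone gd ss exists_hQ (P := denominator z) (fun g => @proj1 _ _).
- split; first exact: (subring0 spR).
  by exists 0; rewrite !rmorph0 mul0r; split=> //; exact: (subring0 spR).
- move=> g1 g2 [g1R [f1 [f1R g1z]]] [g2R [f2 [f2R g2z]]]; split; first exact: (subringD spR).
  by exists (f1 + f2); rewrite !rmorphD mulrDl g1z g2z; split=> //; exact: (subringD spR).
- split; first exact: (subringM spR (polysX sR) gR).
  by exists ('X * f); rewrite !rmorphM -mulrA gz; split=> //; exact: (subringM spR (polysX sR) fR).
- by apply: noN; exists g.
by have [g [Pg nQg]] := nagata_denominator_notin hQ (zQ Q hQ); case: nQg; exact: PQ.
Qed.

End Nagata.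

Theorem proposition2p3 (G : zmodType) (K : fieldType) (Gam : G -> Prop)
  (R : K -> Prop) (Rg : G -> K -> Prop) (star : (K -> Prop) -> (K -> Prop)) :
  graded_domain Gam R Rg ->
  semistar R star ->
  psubset (star R) (RH R Rg) -> star R <> RH R Rg ->
  [/\ Nstar R Rg star =
        (fun f => polys R f /\
           ~ (exists Q, hQMax R Rg (stilde R star) Q /\ polys Q f)),
      (forall M, is_maximal_ideal (NA R Rg star) M <->
         exists Q, hQMax R Rg (stilde R star) Q /\ M = ext_ideal (NA R Rg star) Q) &
      NA R Rg star =
        (fun z => forall Q, hQMax R Rg (stilde R star) Q -> nagata (loc R Q) z)].
Proof.
move=> gd ss starR_RH starR_neq; have exists_hQ := exists_hQMax gd ss starR_RH starR_neq.
split.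
- by apply: funext => f; apply: propext; exact: (Nstar_hQMax gd ss exists_hQ).
- move=> M; split; first exact: (maximal_ideal_ext gd ss exists_hQ).
  by case=> Q [hQ ->]; exact: (maximal_ext_ideal gd ss exists_hQ hQ).
- apply: pred_ext => [z NAz Q hQ|z]; first exact: (NA_nagata gd ss exists_hQ hQ NAz).
  exact: (nagata_NA gd ss exists_hQ).
Qed.
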